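(* For every integer $k\ge 1$ there exists an acyclic temporal network $N=((V\cup \{s\},A),\tau)$ such that $\lambda_{N}(s,v)\ge k$ for all $v\in V$, but $N$ contains no two arc-disjoint spanning $\tau$-respecting $s$-arborescences.
   Context: A temporal network is a pair $N=(D,\tau)$ where $D=(V\cup\{s\},A)$ is a directed graph (parallel arcs allowed) with root $s$ entered by no arc, and $\tau:A\to\mathbb{N}$; it is acyclic if $D$ has no directed cycle. A directed path with arcs $a_1,\dots,a_\ell$ in order is $\tau$-respecting if $\tau(a_1)\le\dots\le\tau(a_\ell)$; $\lambda_N(s,v)$ is the maximum number of pairwise arc-disjoint $\tau$-respecting $(s,v)$-paths. An $s$-arborescence is an acyclic subgraph $F=(V'\cup\{s\},A')$ in which every vertex of $V'$ has in-degree exactly $1$; it is spanning if $V'=V$, and $\tau$-respecting if every path in $F$ from $s$ is $\tau$-respecting. *)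

From mathcomp Require Export all_boot.
Set Implicit Arguments. Unset Strict Implicit. Unset Printing Implicit Defensive.

(* A (finite) temporal network: vertex type (V together with the troot s),
   arcs (a finite type, so parallel arcs are allowed), tail/head maps and
   the time labelling tau : A -> nat. *)
Record tnet := TNet {
  vert : finType;
  troot : vert;
  arc : finType;
  tl : arc -> vert;
  hd : arc -> vert;
  tau : arc -> nat }.

Section TNet.
Variable N : tnet.
Local Notation V := (vert N).
Local Notation A := (arc N).

Fixpoint is_walk (x y : V) (p : seq A) : bool :=
  match p with
  | [::] => x == y
  | a :: p' => (tl a == x) && is_walk (hd a) y p'
  end.

Definition dpath (x y : V) (p : seq A) : bool :=
  is_walk x y p && uniq (x :: map (@hd N) p).

Definition dcycle (x : V) (p : seq A) : bool :=
  (p != [::]) && is_walk x x p && uniq (map (@hd N) p).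

Definition respecting (p : seq A) : bool := sorted leq (map (@tau N) p).

Definition root_unentered : Prop := forall a : A, hd a != troot N.

Definition acyclic_on (F : {set A}) : Prop :=
  forall (x : V) (p : seq A), all (fun a => a \in F) p -> ~~ dcycle x p.

Definition acyclic : Prop := acyclic_on [set: A].

Definition lambda_ge (v : V) (k : nat) : Prop :=
  exists P : 'I_k -> seq A,
    (forall i, dpath (troot N) v (P i) && respecting (P i)) /\
    (forall i j, i != j -> forall a, a \in P i -> a \notin P j).

Definition spanning_arborescence (F : {set A}) : Prop :=
  acyclic_on F /\
  forall v : V, v != troot N -> #|[set a in F | hd a == v]| = 1.

Definition respecting_arb (F : {set A}) : Prop :=
  forall (v : V) (p : seq A),
    all (fun a => a \in F) p -> dpath (troot N) v p -> respecting p.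

End TNet.
Arguments lambda_ge : clear implicits.
Arguments spanning_arborescence : clear implicits.
Arguments respecting_arb : clear implicits.
Arguments acyclic : clear implicits.
Arguments root_unentered : clear implicits.

From mathcomp Require Import all_boot zify.

(** Take a middle layer of [2k-1] vertices, each joined to the root [s] by
    [k] parallel arcs, one at time 1 and the others at time 3, and for every
    [k]-subset [S] of the layer a vertex entered at time 2 by one arc from
    each member of [S]. Every vertex is reached by [k] arc-disjoint respecting
    paths. In a respecting spanning arborescence the in-arc of [S] comes from
    some middle vertex whose own in-arc must then be its time-1 arc, so the
    middle vertices using their time-1 arc meet every [k]-subset and are
    therefore at least [k] in number. Two arc-disjoint arborescences would
    need [2k] distinct middle vertices. *)

Lemma exists_subset_card (T : finType) (A : {set T}) m :
  m <= #|A| -> exists2 B : {set T}, B \subset A & #|B| = m.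
Proof.
move=> le_mA; exists [set x in take m (enum A)].
  by apply/subsetP=> x; rewrite inE => /mem_take; rewrite mem_enum.
have /card_uniqP uniq_take : uniq (take m (enum A)) by apply/take_uniq/enum_uniq.
rewrite cardsE uniq_take.
by rewrite size_takel // -cardE.
Qed.

Lemma hitting_set_card (T : finType) (X : {set T}) k :
  (forall B : {set T}, #|B| = k -> exists2 x, x \in B & x \in X) ->
  #|T| < #|X| + k.
Proof.
move=> hit; rewrite -(cardsC X) ltn_add2l ltnNge.
apply/negP=> /exists_subset_card [B sBCX cardB].
have [x xB xX] := hit B cardB.
by move/subsetP: sBCX => /(_ x xB); rewrite inE xX.
Qed.

Lemma acyclic_of_rank {N : tnet} (rank : vert N -> nat) :
  (forall a : arc N, rank (tl a) < rank (hd a)) -> acyclic N.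
Proof.
move=> rank_arc.
have rank_walk x y p : is_walk x y p -> rank x + size p <= rank y.
  elim: p x => [|a p IHp] x /=; first by move/eqP->; rewrite addn0.
  by case/andP=> /eqP <- /IHp; have := rank_arc a; lia.
move=> x p _; apply/negP=> /andP [/andP [p_ne /rank_walk]].
by case: p p_ne => //= a p _; lia.
Qed.

Lemma spanning_arborescence_in_arc {N : tnet} {F : {set arc N}} {v : vert N} :
  spanning_arborescence N F -> v != troot N -> exists2 a, a \in F & hd a = v.
Proof.
move=> [_ indeg1] /indeg1 /eqP /cards1P [a Fv]; exists a.
all: by have := set11 a; rewrite -Fv inE => /andP [? /eqP].
Qed.

Section Construction.
Variables (k : nat) (k_gt0 : 0 < k).

Definition layer := (k + k).-1.
Definition ksubset := {S : {set 'I_layer} | #|S| == k}.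
Definition member_arc := {p : ksubset * 'I_layer | p.2 \in val p.1}.

Definition net_vert := (unit + ('I_layer + ksubset))%type.
Definition net_arc := (('I_layer * 'I_k) + member_arc)%type.

Let j0 : 'I_k := Ordinal k_gt0.

Definition net_tl (a : net_arc) : net_vert :=
  if a is inr p then inr (inl (val p).2) else inl tt.

Definition net_hd (a : net_arc) : net_vert :=
  match a with inl p => inr (inl p.1) | inr p => inr (inr (val p).1) end.

Definition net_tau (a : net_arc) : nat :=
  match a with inl p => if p.2 == j0 then 1 else 3 | inr _ => 2 end.

Definition net : tnet := @TNet net_vert (inl tt) net_arc net_tl net_hd net_tau.

Definition net_rank (v : net_vert) : nat :=
  match v with inl _ => 0 | inr (inl _) => 1 | inr (inr _) => 2 end.

Lemma net_root_unentered : root_unentered net.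
Proof. by case. Qed.

Lemma net_acyclic : acyclic net.
Proof. by apply: (@acyclic_of_rank net net_rank); case=> [[]|[[]]]. Qed.

Lemma net_lambda_layer (i : 'I_layer) : lambda_ge net (inr (inl i)) k.
Proof.
exists (fun j => [:: (inl (i, j) : net_arc)]); split.
  by move=> j; rewrite /dpath /respecting /= !eqxx.
by move=> j1 j2 ne_j a; rewrite !inE => /eqP ->; apply: contra ne_j => /eqP [->].
Qed.

Definition arc_layer (a : net_arc) : 'I_layer :=
  match a with inl p => p.1 | inr p => (val p).2 end.

Lemma net_lambda_ksubset (S : ksubset) : lambda_ge net (inr (inr S)) k.
Proof.
pose e j : 'I_layer := enum_val (cast_ord (esym (eqP (valP S))) j).
have e_inj : injective e by move=> j1 j2 /enum_val_inj /cast_ord_inj.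
have eS j : e j \in val S by apply: enum_valP.
pose through j := [:: (inl (e j, j0) : net_arc); inr (exist _ (S, e j) (eS j))].
have through_layer j a : a \in through j -> arc_layer a = e j.
  by rewrite !inE => /orP [] /eqP ->.
exists through; split=> [j | j1 j2 ne_j a /through_layer a_j1].
  by rewrite /dpath /respecting /= !eqxx.
by apply: contra ne_j => /through_layer a_j2; apply/eqP/e_inj; rewrite -a_j1 -a_j2.
Qed.

Lemma net_lambda (v : net_vert) : v != inl tt -> lambda_ge net v k.
Proof.
case: v => [[] /eqP //|[i|S] _]; [exact: net_lambda_layer | exact: net_lambda_ksubset].
Qed.

Definition early_layer (F : {set net_arc}) : {set 'I_layer} :=
  [set i | inl (i, j0) \in F].

Lemma early_layer_hits {F : {set net_arc}} (S : ksubset) :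
  spanning_arborescence net F -> respecting_arb net F ->
  exists2 i, i \in val S & i \in early_layer F.
Proof.
move=> arbF respF.
have [[[? ?] //|[[S' i] iS] FiS [<-]]] :=
  spanning_arborescence_in_arc arbF (isT : inr (inr S) != inl tt).
have [[[i' j] Fij [ei]|//]] :=
  spanning_arborescence_in_arc arbF (isT : inr (inl i) != inl tt).
subst i'.
exists i => //; rewrite inE.
have := respF (inr (inr S')) [:: inl (i, j); inr (exist _ (S', i) iS)].
rewrite /= Fij FiS /dpath /= !eqxx /respecting /= => /(_ isT isT).
by case: eqP => [<- |].
Qed.

Lemma early_layer_card {F : {set net_arc}} :
  spanning_arborescence net F -> respecting_arb net F -> k <= #|early_layer F|.
Proof.
move=> arbF respF; suff: #|'I_layer| < #|early_layer F| + k.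
  by rewrite card_ord /layer; lia.
apply: hitting_set_card => B cardB.
exact: (early_layer_hits (exist _ B (introT eqP cardB)) arbF respF).
Qed.

Lemma early_layer_disjoint (F1 F2 : {set net_arc}) :
  [disjoint F1 & F2] -> [disjoint early_layer F1 & early_layer F2].
Proof.
move=> dF; rewrite disjoints_subset; apply/subsetP=> i.
by rewrite !inE => F1i; rewrite (disjointFr dF F1i).
Qed.

Lemma net_no_disjoint_arborescences :
  ~ exists F1 F2 : {set net_arc},
      [/\ spanning_arborescence net F1, respecting_arb net F1,
          spanning_arborescence net F2, respecting_arb net F2
        & [disjoint F1 & F2]].
Proof.
move=> [F1 [F2 [arb1 resp1 arb2 resp2 dF]]].
have: k + k <= #|early_layer F1 :|: early_layer F2|.
  rewrite cardsU disjoint_setI0 ?early_layer_disjoint // cards0 subn0.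
  by rewrite leq_add ?early_layer_card.
by move/leq_trans/(_ (max_card _)); rewrite card_ord /layer; lia.
Qed.

End Construction.

Theorem theorem11 (k : nat) (hk : 1 <= k) :
  exists N : tnet,
    root_unentered N /\ acyclic N /\
    (forall v : vert N, v != troot N -> lambda_ge N v k) /\
    ~ (exists F1 F2 : {set arc N},
          [/\ spanning_arborescence N F1, respecting_arb N F1,
              spanning_arborescence N F2, respecting_arb N F2
            & [disjoint F1 & F2]]).
Proof.
exists (net k hk); split; first exact: net_root_unentered.
split; first exact: net_acyclic.
split; first exact: net_lambda.
exact: net_no_disjoint_arborescences.
Qed.
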